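(* Let $p$ be a prime, let $A$ be a set with $|A|=p^2$, and let $f:A\to A$ be a bijection. Then there exists a binary operation $*$ on $A$ such that $(A,* )$ is a group isomorphic to $\mathbb{Z}_p\times\mathbb{Z}_p$ and $f$ is an automorphism of $(A,* )$ if and only if $f$ is the identity map or the multiset of cycle lengths of $f$ is one of the following: (a) $\frac{p^2-1}{d}$ cycles of length $d$ together with one cycle of length $1$, for some positive divisor $d$ of $p^2-1$; (b) $\frac{p-1}{d}$ cycles of length $pd$, $\frac{p-1}{d}$ cycles of length $d$, and one cycle of length $1$, for some positive divisor $d$ of $p-1$; (c) $\frac{(p-1)^2}{\mathrm{lcm}(d_1,d_2)}$ cycles of length $\mathrm{lcm}(d_1,d_2)$, $\frac{p-1}{d_1}$ cycles of length $d_1$, $\frac{p-1}{d_2}$ cycles of length $d_2$, and one cycle of length $1$, for some positive divisors $d_1,d_2$ of $p-1$ (where cycles listed with equal lengths are counted together).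
   Context: For a bijection $f$ of a finite set, a cycle is a sequence $a_1,\dots,a_m$ of distinct elements with $f(a_j)=a_{j+1}$ for $j<m$ and $f(a_m)=a_1$; its length is $m$; every element lies in exactly one cycle, and fixed points are cycles of length $1$. *)

From HB Require Import structures.
From mathcomp Require Import all_boot all_order all_algebra all_fingroup.
Set Implicit Arguments. Unset Strict Implicit. Unset Printing Implicit Defensive.

Definition is_group_op (A : Type) (op : A -> A -> A) : Prop :=
  associative op /\
  exists e : A, left_id e op /\ right_id e op /\
    forall x, exists y, op x y = e /\ op y x = e.

Definition iso_ZpxZp (p : nat) (A : Type) (op : A -> A -> A) : Prop :=
  exists phi : A -> ('Z_p * 'Z_p)%type,
    bijective phi /\ forall x y, phi (op x y) = (phi x + phi y)%R.

(* f is an automorphism of (A, op) (f is already a bijection). *)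
Definition is_auto (A : Type) (op : A -> A -> A) (f : A -> A) : Prop :=
  forall x y, f (op x y) = op (f x) (f y).

Definition cycle_type (A : finType) (f : {perm A}) : seq nat :=
  [seq #|C| | C : {set A} <- enum (porbits f)].

From HB Require Import structures.
From mathcomp Require Import all_boot all_order all_algebra all_fingroup.
From mathcomp Require Import cyclic finfield.
From mathcomp Require Import ring zify.
Set Implicit Arguments. Unset Strict Implicit. Unset Printing Implicit Defensive.
Import GRing.Theory FinRing.Theory.

(* Transport of structure identifies the group structures (A, * ) isomorphic to
   Z_p x Z_p of which f is an automorphism with the additive, hence F_p-linear,
   bijections of F_p^2 conjugate to f; and two permutations are conjugate exactly
   when they have the same cycle type.  So one needs the cycle types of the
   invertible linear maps g of F_p^2.  If g has no eigenvector, a power of g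
   fixing some u <> 0 fixes the basis u, g u, so all nonzero vectors share one
   period d, which divides p^2 - 1; multiplication by an element of order d of
   the cyclic group F_(p^2)^* realises it.  Otherwise g is diagonal or a Jordan
   block in a suitable basis, and the period of a vector is read off from the
   orders of the eigenvalues in F_p^* and from which coordinates vanish. *)

Section Period.
Variables (T : finType) (s : {perm T}).

Definition period x := #|porbit s x|.

Definition period_count m := #|[set x | period x == m]|.

Lemma period_gt0 x : 0 < period x.
Proof. by rewrite lt0n card_porbit_neq0. Qed.

Lemma iter_period_dvd x k : (iter k s x == x) = (period x %| k).
Proof.
have iter_mul q : iter (q * period x) s x = x.
  by elim: q => //= q IH; rewrite mulSn iterD IH iter_porbit.
rewrite {1}(divn_eq k (period x)) addnC iterD iter_mul /dvdn.
have [-> | r_gt0] := posnP (k %% period x); first by rewrite eqxx.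
apply/negP => /eqP fix_r.
have lt_r : k %% period x < period x by rewrite ltn_mod period_gt0.
have : nth x (traject s x (period x)) (k %% period x) = nth x (traject s x (period x)) 0.
  by rewrite !nth_traject ?period_gt0.
move/eqP; rewrite nth_uniq ?size_traject ?period_gt0 ?uniq_traject_porbit //.
by rewrite gtn_eqF.
Qed.

Lemma period_eq x m : (forall k, (iter k s x == x) = (m %| k)) -> period x = m.
Proof.
move=> Hm; apply/eqP; rewrite eqn_dvd -Hm iter_period_dvd dvdnn /=.
by rewrite -iter_period_dvd Hm dvdnn.
Qed.

Lemma period_iter x k : period (iter k s x) = period x.
Proof. by rewrite /period -permX porbit_perm. Qed.

Lemma eq_iter_period x a b : (iter a s x == iter b s x) = (a == b %[mod period x]).
Proof.
wlog le_ab : a b / a <= b.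
  by move=> W; case: (leqP a b) => [/W // | /ltnW/W]; rewrite eq_sym [RHS]eq_sym.
rewrite -(subnK le_ab) iterD eq_sym -{2}(period_iter x a) iter_period_dvd period_iter.
by rewrite [RHS]eq_sym eqn_mod_dvd ?leq_addl // addnK.
Qed.

Definition orbit_rep x := odflt x [pick y in porbit s x].

Lemma orbit_repP x : orbit_rep x \in porbit s x.
Proof. by rewrite /orbit_rep; case: pickP => [// | /(_ x)]; rewrite porbit_id. Qed.

Lemma porbit_orbit_rep x : porbit s (orbit_rep x) = porbit s x.
Proof. by apply/eqP; rewrite eq_porbit_mem orbit_repP. Qed.

Lemma orbit_rep_eq x y : (orbit_rep x == orbit_rep y) = (y \in porbit s x).
Proof.
apply/eqP/idP => [E | y_x].
  by rewrite -eq_porbit_mem -[porbit s x]porbit_orbit_rep E porbit_orbit_rep.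
rewrite /orbit_rep; have -> : porbit s y = porbit s x by apply/eqP; rewrite eq_porbit_mem.
by case: pickP => [// | /(_ x)]; rewrite porbit_id.
Qed.

Lemma orbit_rep_id x : orbit_rep (orbit_rep x) = orbit_rep x.
Proof. by apply/eqP; rewrite eq_sym orbit_rep_eq orbit_repP. Qed.

Lemma orbit_rep_iter x k : orbit_rep (iter k s x) = orbit_rep x.
Proof. by apply/eqP; rewrite eq_sym orbit_rep_eq -permX mem_porbit. Qed.

Lemma period_orbit_rep x : period (orbit_rep x) = period x.
Proof.
by rewrite /period porbit_orbit_rep.
Qed.

Definition orbit_index x := index x (traject s (orbit_rep x) (period x)).

Lemma mem_traject_orbit_rep x : x \in traject s (orbit_rep x) (period x).
Proof.
by rewrite -period_orbit_rep -porbit_traject porbit_orbit_rep porbit_id.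
Qed.

Lemma orbit_index_lt x : orbit_index x < period x.
Proof.
by rewrite -[ltnRHS](size_traject s (orbit_rep x)) index_mem mem_traject_orbit_rep.
Qed.

Lemma iter_orbit_index x : iter (orbit_index x) s (orbit_rep x) = x.
Proof.
by rewrite -(nth_traject s (orbit_index_lt x)) nth_index ?mem_traject_orbit_rep.
Qed.

Definition cycle_reps m := [set r | (orbit_rep r == r) && (period r == m)].

Lemma card_cycle_reps m : #|cycle_reps m| = count_mem m (cycle_type s).
Proof.
have count_enum (P : pred {set T}) :
    count P (enum (porbits s)) = #|[set C in porbits s | P C]|.
  rewrite cardE -size_filter; apply/perm_size/uniq_perm.
  - by rewrite filter_uniq ?enum_uniq.
  - exact: enum_uniq.
  by move=> C; rewrite mem_filter !mem_enum !inE andbC.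
rewrite count_map count_enum -(@card_in_imset _ _ (porbit s)); last first.
  move=> r1 r2; rewrite !inE => /andP[/eqP <- _] /andP[/eqP <- _] /eqP.
  by rewrite !porbit_orbit_rep eq_porbit_mem -orbit_rep_eq eq_sym => /eqP.
apply: eq_card => C; rewrite !inE; apply/imsetP/andP => [[r] | [/imsetP[x _ ->]]].
  by rewrite inE => /andP[_ /eqP <-] ->; rewrite imset_f.
move=> /eqP Px; exists (orbit_rep x); last by rewrite porbit_orbit_rep.
by rewrite inE orbit_rep_id period_orbit_rep /period Px !eqxx.
Qed.

Lemma period_count_reps m : period_count m = #|cycle_reps m| * m.
Proof.
rewrite /period_count -sum1dep_card.
rewrite (partition_big orbit_rep (fun r => r \in cycle_reps m)); last first.
  by move=> x /eqP Px; rewrite inE orbit_rep_id period_orbit_rep Px !eqxx.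
rewrite -sum_nat_const; apply: eq_bigr => r; rewrite inE => /andP[/eqP rep_r /eqP <-].
rewrite sum1dep_card /period; apply: eq_card => x; rewrite inE.
by rewrite -{2}rep_r orbit_rep_eq porbit_sym andb_idl // -eq_porbit_mem => /eqP ->.
Qed.

Lemma count_cycle_type m : count_mem m (cycle_type s) * m = period_count m.
Proof. by rewrite period_count_reps card_cycle_reps. Qed.

Lemma cycle_type_neq0 : 0 \notin cycle_type s.
Proof.
apply/count_memPn; rewrite -card_cycle_reps; apply: eq_card0 => x.
by rewrite !inE gtn_eqF ?andbF ?period_gt0.
Qed.

Lemma perm_eq_cycle_type (L : seq nat) :
    0 \notin L -> (forall m, 0 < m -> period_count m = count_mem m L * m) ->
  perm_eq (cycle_type s) L.
Proof.
move=> L0 count_L; apply/allP => m _; apply/eqP.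
have [-> | m_gt0] := posnP m.
  by rewrite (count_memPn cycle_type_neq0) (count_memPn L0).
by apply/eqP; rewrite -(eqn_pmul2r m_gt0) count_cycle_type count_L.
Qed.

Lemma period_countE m : period_count m = \sum_x (period x == m).
Proof. by rewrite /period_count -sum1dep_card big_mkcond; apply: eq_bigr => x _; case: eqP. Qed.

Lemma period_fix x : s x = x -> period x = 1.
Proof. by move=> sx; apply: period_eq => k; rewrite iter_fix ?eqxx ?dvd1n. Qed.

End Period.

Section Conjugacy.
Variables T U : finType.

Definition perm_conj (s : {perm T}) (t : {perm U}) :=
  exists2 psi : T -> U, bijective psi & forall x, psi (s x) = t (psi x).

Lemma card_bij : #|T| = #|U| -> exists psi : T -> U, bijective psi.
Proof.
move=> cTU; have cast_bij := Bijective (cast_ordK cTU) (cast_ordKV cTU).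
exists (fun x => enum_val (cast_ord cTU (enum_rank x))).
exact: bij_comp (enum_val_bij U) (bij_comp cast_bij (enum_rank_bij T)).
Qed.

Lemma perm_conj1 : #|T| = #|U| -> perm_conj 1 1.
Proof. by case/card_bij => psi psi_bij; exists psi => // x; rewrite !perm1. Qed.

Lemma period_conj (s : {perm T}) (t : {perm U}) psi :
    injective psi -> (forall x, psi (s x) = t (psi x)) ->
  forall x, period t (psi x) = period s x.
Proof.
move=> psi_inj psi_conj x; apply: period_eq => k.
have -> : iter k t (psi x) = psi (iter k s x) by elim: k => //= k ->.
by rewrite (inj_eq psi_inj) iter_period_dvd.
Qed.

Lemma perm_conj_cycle_type (s : {perm T}) (t : {perm U}) :
  perm_conj s t -> perm_eq (cycle_type s) (cycle_type t).
Proof.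
move=> [psi psi_bij psi_conj]; apply: perm_eq_cycle_type => [|m _].
  exact: cycle_type_neq0.
rewrite count_cycle_type /period_count -(card_imset _ (bij_inj psi_bij)).
have psi_period := period_conj (bij_inj psi_bij) psi_conj.
apply: eq_card => y; rewrite inE; have [phi psiK phiK] := psi_bij.
apply/imsetP/idP => [[x] | /eqP Py]; first by rewrite inE => /eqP Px ->; rewrite psi_period Px.
by exists (phi y); rewrite ?phiK // inE -psi_period phiK Py.
Qed.

Lemma cycle_type_perm_conj (s : {perm T}) (t : {perm U}) :
  #|T| = #|U| -> perm_eq (cycle_type s) (cycle_type t) -> perm_conj s t.
Proof.
move=> cTU /seq.permP eq_ct; have [c c_bij] := card_bij cTU.
case: (pickP (@predT T)) => [x0 _ | T0]; last by exists c => // x; have := T0 x.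
(* Match the m-cycles of s with those of t through their representatives, then
   map each cycle of s onto its partner along the iterates. *)
pose reps_s r := enum (cycle_reps s (period s r)).
pose reps_t r := enum (cycle_reps t (period s r)).
have size_reps r : size (reps_s r) = size (reps_t r).
  by rewrite -!cardE !card_cycle_reps eq_ct.
have rep_s r : orbit_rep s r = r -> r \in reps_s r.
  by move=> rep_r; rewrite mem_enum inE rep_r !eqxx.
pose beta r := nth (c x0) (reps_t r) (index r (reps_s r)).
have beta_rep r : orbit_rep s r = r ->
    orbit_rep t (beta r) = beta r /\ period t (beta r) = period s r.
  move=> /rep_s r_in; have : beta r \in reps_t r by rewrite mem_nth // -size_reps index_mem.
  by rewrite mem_enum inE => /andP[/eqP -> /eqP ->].
have beta_inj r1 r2 : orbit_rep s r1 = r1 -> orbit_rep s r2 = r2 ->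
    beta r1 = beta r2 -> r1 = r2.
  move=> /[dup] /beta_rep[_ P1] /rep_s r1_in /[dup] /beta_rep[_ P2] /rep_s r2_in E.
  have E12 : period s r1 = period s r2 by rewrite -P1 E P2.
  have [Es Et] : reps_s r1 = reps_s r2 /\ reps_t r1 = reps_t r2 by rewrite /reps_s /reps_t E12.
  move: E; rewrite /beta Es Et => /eqP; rewrite Es in r1_in.
  rewrite nth_uniq ?enum_uniq -?size_reps ?index_mem // => /eqP Ei.
  by rewrite -(nth_index r1 r1_in) Ei nth_index.
pose psi x := iter (orbit_index s x) t (beta (orbit_rep s x)).
have rep_psi x : orbit_rep t (psi x) = beta (orbit_rep s x).
  by rewrite orbit_rep_iter; case: (beta_rep _ (orbit_rep_id s x)).
have period_psi x : period t (beta (orbit_rep s x)) = period s x.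
  by case: (beta_rep _ (orbit_rep_id s x)) => _ ->; rewrite period_orbit_rep.
have psi_inj : injective psi.
  move=> x y E; have Er : orbit_rep s x = orbit_rep s y.
    by apply: beta_inj; rewrite ?orbit_rep_id // -!rep_psi E.
  move/eqP: E; rewrite /psi Er eq_iter_period period_psi.
  have Ep : period s x = period s y by rewrite -period_orbit_rep Er period_orbit_rep.
  rewrite !modn_small ?orbit_index_lt -?Ep ?orbit_index_lt // => /eqP Ei.
  by rewrite -(iter_orbit_index s x) -(iter_orbit_index s y) Ei Er.
exists psi => [|x]; first by apply: inj_card_bij psi_inj _; rewrite cTU.
have rep_sx : orbit_rep s (s x) = orbit_rep s x by rewrite -(orbit_rep_iter s x 1).
rewrite /psi rep_sx -iterS; apply/eqP; rewrite eq_iter_period period_psi.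
by rewrite -period_orbit_rep -eq_iter_period -{1}rep_sx iterS !iter_orbit_index.
Qed.

End Conjugacy.

Definition mul_type n d := nseq (n %/ d) d ++ [:: 1].

Definition jordan_type p d := nseq ((p - 1) %/ d) (p * d) ++ nseq ((p - 1) %/ d) d ++ [:: 1].

Definition diag_type q d1 d2 :=
  nseq ((q - 1) ^ 2 %/ lcmn d1 d2) (lcmn d1 d2)
  ++ nseq ((q - 1) %/ d1) d1 ++ nseq ((q - 1) %/ d2) d2 ++ [:: 1].

Lemma count_nseq_div n d m c :
  d %| n -> count_mem m (nseq (n %/ d) (c * d)) * m = c * n * (c * d == m).
Proof.
move=> /divnK nK; rewrite count_nseq /=; case: eqP => [<- | _] /=; last by rewrite muln0.
by rewrite mul1n muln1 mulnCA nK.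
Qed.

Lemma cycle_type_one_fixed (T : finType) (s : {perm T}) x0 d :
    s x0 = x0 -> (forall x, x != x0 -> period s x = d) ->
  d %| #|T|.-1 /\ perm_eq (cycle_type s) (mul_type #|T|.-1 d).
Proof.
move=> s_x0 period_d.
have count_d m : period_count s m = (1 == m) + #|T|.-1 * (d == m).
  rewrite period_countE (bigD1 x0) //= period_fix //.
  rewrite (eq_bigr (fun _ => d == m : nat)) => [|x /period_d -> //].
  by rewrite sum_nat_cond_const cardsE cardC1 mulnC.
have d_dvd : d %| #|T|.-1.
  have [-> // | d_neq1] := eqVneq d 1; apply/dvdnP; exists (count_mem d (cycle_type s)).
  by rewrite count_cycle_type count_d eqxx eq_sym (negPf d_neq1) muln1.
split => //; apply: perm_eq_cycle_type => [|m _].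
  by rewrite mem_cat mem_nseq inE; case: d {period_d count_d d_dvd} => [|d]; rewrite ?divn0 ?andbF.
have := count_nseq_div m 1 d_dvd; rewrite !mul1n => count_nseq_d.
rewrite count_d /mul_type count_cat mulnDl count_nseq_d /=.
by case: eqP => [<- | _]; lia.
Qed.

Section ProductPerm.
Variables (T U : finType) (s : {perm T}) (t : {perm U}).

Fact prod_perm_inj : injective (fun v : T * U => (s v.1, t v.2)).
Proof. by move=> [x y] [x' y'] [/perm_inj -> /perm_inj ->]. Qed.

Definition prod_perm : {perm T * U} := perm prod_perm_inj.

Lemma period_prod_perm x y : period prod_perm (x, y) = lcmn (period s x) (period t y).
Proof.
apply: period_eq => k; rewrite dvdn_lcm -!iter_period_dvd.
have -> : iter k prod_perm (x, y) = (iter k s x, iter k t y).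
  by elim: k => //= k ->; rewrite permE.
by rewrite xpair_eqE.
Qed.

End ProductPerm.

Local Open Scope ring_scope.

Lemma Zp2_iso (U : finZmodType) p :
    prime p -> #|U| = (p ^ 2)%N -> (forall u : U, u *+ p = 0) ->
  exists2 E : 'Z_p * 'Z_p -> U, bijective E & {morph E : a b / a + b}.
Proof.
move=> p_pr cardU pU.
(* (Zp_trunc p).+2 is the modulus of 'Z_p, that is p. *)
have mulrn_modp (w : U) n : w *+ (n %% (Zp_trunc p).+2) = w *+ n.
  by rewrite Zp_cast ?prime_gt1 // {2}(divn_eq n p) mulrnDr mulnC mulrnA pU mul0rn add0r.
have order_p (w : U) : w != 0 -> #[w]%g = p.
  by move=> w0; apply: nt_prime_order p_pr _ w0; exact: pU.
have [u u0] : exists u : U, u != 0.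
  have /card_gt1P[x [y [_ _ xy]]] : (1 < #|U|)%N by rewrite cardU; have := prime_gt1 p_pr; nia.
  by have [x0 | ] := eqVneq x 0; [exists y; rewrite -x0 eq_sym | exists x].
have [v v_u] : exists v : U, v \notin <[u]>%g.
  apply/existsP; apply: contraLR (prime_gt1 p_pr); rewrite negb_exists => /forallP all_u.
  have : (#|U| <= #[u]%g)%N by apply/subset_leq_card/subsetP => w _; apply/negPn/all_u.
  by rewrite cardU order_p // -ltnNge; nia.
have v0 : v != 0 by apply: contraNneq v_u => ->; exact: group1.
pose E (z : 'Z_p * 'Z_p) := u *+ z.1 + v *+ z.2.
have E_add : {morph E : a b / a + b}.
  by move=> [a1 a2] [b1 b2]; rewrite /E /= !mulrn_modp !mulrnDr addrACA.
have lt_p (x : 'Z_p) : (x < p)%N by rewrite -[p in (_ < p)%N]Zp_cast ?prime_gt1.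
have E_ker z : E z = 0 -> z = 0.
  case: z => a b; rewrite /E /= addrC => /eqP; rewrite addr_eq0 => /eqP vb.
  have b0 : b = 0.
    apply/val_inj/eqP; apply: contraNT v_u; rewrite -lt0n => b_gt0.
    have /eqP gen_vb : generator <[v]>%g (v ^+ b)%g.
      by rewrite generator_coprime order_p // prime_coprime // gtnNdvd.
    by rewrite -cycle_subG gen_vb cycle_subG zmodXgE vb -zmodXgE groupV mem_cycle.
  move: vb; rewrite b0 mulr0n => /eqP; rewrite eq_sym oppr_eq0 -zmodXgE -order_dvdn.
  rewrite order_p // /dvdn modn_small // => a0.
  by congr pair; apply/val_inj/eqP.
have E_inj : injective E.
  move=> x y Exy; apply/eqP; rewrite -subr_eq0; apply/eqP/E_ker.
  by apply: (addIr (E y)); rewrite -E_add subrK Exy add0r.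
exists E => //; apply: inj_card_bij E_inj _.
by rewrite card_prod card_ord Zp_cast ?prime_gt1 // cardU.
Qed.

Section AutoStructure.
Variables (p : nat) (A : finType) (U : finZmodType) (f : {perm A}).
Variable E : 'Z_p * 'Z_p -> U.
Hypotheses (E_bij : bijective E) (E_add : {morph E : a b / a + b}).

Definition auto_structure :=
  exists op : A -> A -> A, is_group_op op /\ iso_ZpxZp p op /\ is_auto op f.

Lemma auto_structure_additive_conj :
  auto_structure -> exists2 g : {perm U}, {morph g : a b / a + b} & perm_conj f g.
Proof.
move=> [op [_ [[phi [phi_bij phi_add]] f_auto]]].
pose psi x := E (phi x); have psi_bij : bijective psi by apply: bij_comp.
have [psi' psiK psiK'] := psi_bij.
have psi'_add a b : psi' (a + b) = op (psi' a) (psi' b).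
  by apply: (bij_inj psi_bij); rewrite /psi phi_add E_add -!/(psi _) !psiK'.
have g_inj : injective (fun a => psi (f (psi' a))).
  by move=> a b /(bij_inj psi_bij)/perm_inj/(can_inj psiK').
exists (perm g_inj); last by exists psi => // x; rewrite permE psiK.
by move=> a b; rewrite !permE psi'_add f_auto /psi phi_add E_add.
Qed.

Lemma additive_conj_auto_structure (g : {perm U}) :
  {morph g : a b / a + b} -> perm_conj f g -> auto_structure.
Proof.
move=> g_add [psi psi_bij psi_conj]; have [E' EK E'K] := E_bij.
pose phi x := E' (psi x); have phi_bij : bijective phi by apply: bij_comp => //; exists E.
have [phi' phiK phi'K] := phi_bij.
have E'_add a b : E' (a + b) = E' a + E' b by apply: (bij_inj E_bij); rewrite E_add !E'K.
pose op x y := phi' (phi x + phi y).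
have phi_op x y : phi (op x y) = phi x + phi y by rewrite phi'K.
have phi_inj := bij_inj phi_bij.
exists op; split; last split.
- split; first by move=> x y z; apply: phi_inj; rewrite !phi_op addrA.
  exists (phi' 0); split; last split.
  + by move=> x; apply: phi_inj; rewrite phi_op phi'K add0r.
  + by move=> x; apply: phi_inj; rewrite phi_op phi'K addr0.
  by move=> x; exists (phi' (- phi x)); split; apply: phi_inj; rewrite phi_op phi'K ?subrr ?addNr.
- by exists phi.
move=> x y; apply: phi_inj; rewrite phi_op /phi !psi_conj -!/(phi _).
by rewrite -[psi (op x y)]E'K -/(phi _) phi_op E_add g_add E'_add /phi !E'K.
Qed.

Lemma cycle_type_auto_structure (g : {perm U}) (L : seq nat) :
    #|A| = #|U| -> {morph g : a b / a + b} ->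
    perm_eq (cycle_type f) L -> perm_eq (cycle_type g) L ->
  auto_structure.
Proof.
move=> cardAU g_add ct_f ct_g; apply: (additive_conj_auto_structure g_add).
by apply: cycle_type_perm_conj; rewrite // (perm_trans ct_f) // perm_sym.
Qed.

End AutoStructure.

Section MulPerm.
Variables (F : finFieldType) (z : {unit F}).

Definition mul_perm : {perm F} := perm (mulrI (valP z)).

Lemma iter_mul_perm k x : iter k mul_perm x = val z ^+ k * x.
Proof. by elim: k => [|k IH]; rewrite ?mul1r //= IH permE exprS mulrA. Qed.

Lemma period_mul_perm x : period mul_perm x = if x == 0 then 1%N else #[z]%g.
Proof.
apply: period_eq => k; rewrite iter_mul_perm.
have [-> | x0] := eqVneq x 0; first by rewrite mulr0 eqxx dvd1n.
by rewrite -{2}[x]mul1r (inj_eq (mulIf x0)) order_dvdn -val_unitX -val_eqE.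
Qed.

Lemma cycle_type_mul_perm : perm_eq (cycle_type mul_perm) (mul_type #|F|.-1 #[z]%g).
Proof.
by case: (@cycle_type_one_fixed _ mul_perm 0 #[z]%g) => // [|x /negPf x0];
  rewrite ?permE ?mulr0 // period_mul_perm x0.
Qed.

Lemma order_unit_dvdn : (#[z]%g %| #|F|.-1)%N.
Proof. by rewrite -card_finField_unit order_dvdG ?inE. Qed.

End MulPerm.

Lemma exists_unit_order (F : finFieldType) d :
  (d %| #|F|.-1)%N -> exists z : {unit F}, #[z]%g = d.
Proof.
move=> d_dvd; have /cyclicP[u def_units] := field_unit_group_cyclic [set: {unit F}]%G.
have u_order : #[u]%g = #|F|.-1 by rewrite -card_finField_unit def_units.
have n_gt0 : (0 < #|F|.-1)%N by rewrite -subn1 subn_gt0 card_finNzRing_gt1.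
exists (u ^+ (#|F|.-1 %/ d))%g.
by rewrite orderXdiv u_order ?dvdn_div // divnA // mulKn.
Qed.

Section PlaneCounting.
Variable F : finFieldType.
Local Notation W := (F * F)%type.

Lemma sum_zero_pattern (G : bool -> bool -> nat) :
  (\sum_(v : W) G (v.1 == 0%R) (v.2 == 0%R) =
     G true true + #|F|.-1 * (G false true + G true false) + #|F|.-1 ^ 2 * G false false)%N.
Proof.
have sum_F (H : bool -> nat) : (\sum_(x : F) H (x == 0%R) = H true + #|F|.-1 * H false)%N.
  rewrite (bigD1 0) //= eqxx (eq_bigr (fun _ => H false)) => [|x /negPf -> //].
  by rewrite sum_nat_cond_const cardsE cardC1 mulnC.
have -> : (\sum_(v : W) G (v.1 == 0%R) (v.2 == 0%R) =
    \sum_(x : F) \sum_(y : F) G (x == 0%R) (y == 0%R))%N by rewrite pair_big.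
rewrite (eq_bigr (fun x : F => G (x == 0%R) true + #|F|.-1 * G (x == 0%R) false))%N.
  by rewrite (sum_F (fun b => G b true + #|F|.-1 * G b false)%N); lia.
by move=> x _; rewrite (sum_F (G (x == 0%R))).
Qed.

Lemma cycle_type_diag (l m : {unit F}) :
  perm_eq (cycle_type (prod_perm (mul_perm l) (mul_perm m))) (diag_type #|F| #[l]%g #[m]%g).
Proof.
have [d1_gt0 d2_gt0] := (order_gt0 l, order_gt0 m).
have [d1_dvd d2_dvd] := (order_unit_dvdn l, order_unit_dvdn m); rewrite -subn1 in d1_dvd d2_dvd.
have L_dvd : (lcmn #[l]%g #[m]%g %| (#|F| - 1) ^ 2)%N by rewrite dvdn_lcm expnS expn1 !dvdn_mulr.
apply: perm_eq_cycle_type => [|n n_gt0].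
  by rewrite /diag_type !mem_cat !mem_nseq !(eq_sym 0%N) !eqn0Ngt lcmn_gt0 d1_gt0 d2_gt0 !andbF.
pose G b1 b2 := lcmn (if b1 then 1 else #[l]%g) (if b2 then 1 else #[m]%g) == n : nat.
rewrite period_countE (eq_bigr (fun v => G (v.1 == 0) (v.2 == 0))) => [|[x y] _]; last first.
  by rewrite period_prod_perm !period_mul_perm.
have := count_nseq_div n 1 L_dvd; have := count_nseq_div n 1 d1_dvd.
have := count_nseq_div n 1 d2_dvd; rewrite /diag_type !count_cat !mulnDl !mul1n => -> -> -> /=.
have -> : ((1 == n) * n = (1 == n))%N by case: eqP => [<- |].
by rewrite sum_zero_pattern /G !lcmn1 !lcm1n -subn1; ring.
Qed.

End PlaneCounting.

Lemma order_unit_Fp p (l : {unit 'F_p}) : prime p -> (#[l]%g %| p - 1)%N.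
Proof. by move=> p_pr; have := order_unit_dvdn l; rewrite card_Fp // subn1. Qed.

Section Jordan.
Variables (p : nat) (l : {unit 'F_p}).
Hypothesis p_pr : prime p.
Local Notation W := ('F_p * 'F_p)%type.

Fact jordan_inj : injective (fun v : W => (val l * (v.1 + v.2), val l * v.2)).
Proof.
move=> [x y] [x' y'] /eqP; rewrite xpair_eqE /= => /andP[/eqP E1 /eqP/(mulrI (valP l)) Ey].
by move: E1; rewrite Ey => /(mulrI (valP l))/addIr ->.
Qed.

Definition jordan_perm : {perm W} := perm jordan_inj.

Lemma period_jordan x y :
  period jordan_perm (x, y) = if y == 0 then period (mul_perm l) x else (p * #[l]%g)%N.
Proof.
apply: period_eq => k.
have -> : iter k jordan_perm (x, y) = (val l ^+ k * (x + k%:R * y), val l ^+ k * y).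
  elim: k => [|k IH]; first by rewrite /= !mul1r mul0r addr0.
  rewrite iterS IH permE /= -natr1 !exprS -!mulrA; congr (_ * _, _ * _).
  by rewrite -mulrDr mulrDl mul1r addrA.
have [-> | y0] := eqVneq y 0.
  by rewrite mulr0 addr0 -iter_period_dvd iter_mul_perm xpair_eqE mulr0 eqxx andbT.
rewrite xpair_eqE -[X in _ * y == X]mul1r (inj_eq (mulIf y0)) Gauss_dvd; last first.
  rewrite prime_coprime // gtnNdvd ?order_gt0 //.
  by apply: leq_ltn_trans (dvdn_leq _ (order_unit_Fp l p_pr)) _; have := prime_gt1 p_pr; lia.
rewrite order_dvdn -[(_ == 1)%g]val_eqE val_unitX [RHS]andbC.
have [lk1 | ] := eqVneq (val l ^+ k) 1; last by rewrite !andbF.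
rewrite lk1 mul1r -[X in _ == X]addr0 (inj_eq (addrI x)) mulf_eq0 (negPf y0) orbF.
by rewrite (dvdn_pcharf (pchar_Fp p_pr)) !andbT.
Qed.

Lemma cycle_type_jordan : perm_eq (cycle_type jordan_perm) (jordan_type p #[l]%g).
Proof.
set d := #[l]%g; have d_gt0 : (0 < d)%N := order_gt0 l.
have d_dvd : (d %| p - 1)%N := order_unit_Fp l p_pr.
have p_gt0 := prime_gt0 p_pr.
apply: perm_eq_cycle_type => [|n n_gt0].
  by rewrite /jordan_type !mem_cat !mem_nseq !(eq_sym 0%N) !eqn0Ngt muln_gt0 p_gt0 d_gt0 !andbF.
rewrite period_countE.
pose G b1 b2 := (if b2 then (if b1 then 1 else d) else p * d) == n : nat.
rewrite (eq_bigr (fun v : W => G (v.1 == 0) (v.2 == 0))); last first.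
  by move=> [x y] _; rewrite period_jordan period_mul_perm /G; case: (y == 0).
rewrite sum_zero_pattern card_Fp //.
have := count_nseq_div n p d_dvd; have := count_nseq_div n 1 d_dvd.
rewrite /jordan_type !count_cat !mulnDl !mul1n => -> -> /=.
have -> : ((1 == n) * n = (1 == n))%N by case: eqP => [<- |].
have -> : (p * (p - 1) = (p - 1) + (p - 1) ^ 2)%N by rewrite mulnBr; nia.
by rewrite /G /= -subn1; ring.
Qed.

End Jordan.

Section PlaneGeometry.
Variable F : fieldType.
Local Notation W := (F * F)%type.
Implicit Types (a b : F) (u v w : W).

Definition scalep a v : W := (a * v.1, a * v.2).

Definition det v w := v.1 * w.2 - v.2 * w.1.

Lemma coord_bij v w : det v w != 0 -> bijective (fun z : W => scalep z.1 v + scalep z.2 w).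
Proof.
case: v w => [v1 v2] [w1 w2]; rewrite /det /scalep /= => dvw.
exists (fun u => ((u.1 * w2 - u.2 * w1) / (v1 * w2 - v2 * w1),
                  (v1 * u.2 - v2 * u.1) / (v1 * w2 - v2 * w1))).
  by move=> [a b] /=; congr pair; field.
by move=> [x y]; congr pair => /=; field.
Qed.

Lemma det_eq0_scalep v w : v != 0 -> det v w = 0 -> exists a, w = scalep a v.
Proof.
case: v w => [v1 v2] [w1 w2]; rewrite /det /scalep /= => v0 /eqP; rewrite subr_eq0 => /eqP vw.
have [v1_0 | v1_n0] := eqVneq v1 0.
  have v2_n0 : v2 != 0 by apply: contraNneq v0 => ->; rewrite v1_0.
  exists (w2 / v2); congr pair; last by field.
  by move: vw; rewrite v1_0 mul0r => /esym/eqP; rewrite mulf_eq0 (negPf v2_n0) mulr0 => /eqP.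
by exists (w1 / v1); congr pair; [field | apply: (mulfI v1_n0); rewrite vw; field].
Qed.

End PlaneGeometry.

Section AdditivePlanePerm.
Variable p : nat.
Hypothesis p_pr : prime p.
Local Notation W := ('F_p * 'F_p)%type.

Lemma additive_scalep (h : W -> W) a v : {morph h : u u' / u + u'} ->
  h (scalep a v) = scalep a (h v).
Proof.
move=> h_add; have scalepE (c : 'F_p) (u : W) : scalep c u = u *+ (c : nat).
  by rewrite pairMnE /scalep -[c in LHS]natr_Zp !mulr_natl.
rewrite !scalepE; elim: (a : nat) => [|n IH]; last by rewrite !mulrS h_add IH.
by rewrite !mulr0n; apply: (addrI (h 0)); rewrite -h_add !addr0.
Qed.

Lemma additive_coord (h : W -> W) a v b w : {morph h : u u' / u + u'} ->
  h (scalep a v + scalep b w) = scalep a (h v) + scalep b (h w).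
Proof. by move=> h_add; rewrite h_add !(additive_scalep _ _ h_add). Qed.

Variable g : {perm W}.
Hypothesis g_add : {morph g : u v / u + v}.

Lemma coord_conj (s : {perm W}) v w : det v w != 0 ->
    (forall z, g (scalep z.1 v + scalep z.2 w) = scalep (s z).1 v + scalep (s z).2 w) ->
  perm_conj s g.
Proof.
move=> dvw g_coord; exists (fun z => scalep z.1 v + scalep z.2 w); first exact: coord_bij.
by move=> z; rewrite g_coord.
Qed.

Lemma additive_perm0 : g 0 = 0.
Proof. by apply: (addrI (g 0)); rewrite -g_add !addr0. Qed.

Lemma eigenvalue_neq0 v a : v != 0 -> g v = scalep a v -> a != 0.
Proof.
move=> v0 gv; apply: contraNneq v0 => a0; apply/eqP/(@perm_inj _ g).
by rewrite gv a0 additive_perm0 /scalep !mul0r.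
Qed.

Lemma no_eigen_cycle_type : (forall v a, v != 0 -> g v != scalep a v) ->
  exists d, [/\ 0 < d, d %| p ^ 2 - 1 & perm_eq (cycle_type g) (mul_type (p ^ 2 - 1) d)]%N.
Proof.
move=> no_eigen.
have iter_add k : {morph iter k g : u v / u + v}.
  by elim: k => // k IH u v; rewrite !iterS IH g_add.
(* A power of g fixing some u != 0 fixes the basis u, g u. *)
have fix_all (u : W) k (w : W) : u != 0 -> iter k g u = u -> iter k g w = w.
  move=> u0 fix_u; have dug : det u (g u) != 0.
    by apply/negP => /eqP/(det_eq0_scalep u0)[a gu]; have /eqP := no_eigen u a u0.
  have [c _ cK] := coord_bij dug.
  by rewrite -[w]cK (additive_coord _ _ _ _ (iter_add k)) -iterSr iterS fix_u.
pose e : W := (1, 0); have e0 : e != 0 by rewrite xpair_eqE oner_eq0.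
have period_e (w : W) : w != 0 -> period g w = period g e.
  move=> w0; apply: period_eq => k; rewrite -iter_period_dvd.
  by apply/eqP/eqP => [/(fix_all w k e w0) | /(fix_all e k w e0)].
have [d_dvd ct] := cycle_type_one_fixed additive_perm0 period_e.
have cardW : #|{: W}|.-1 = (p ^ 2 - 1)%N by rewrite card_prod card_Fp // mulnn subn1.
by exists (period g e); rewrite period_gt0 -cardW.
Qed.

Lemma diag_conj v w (l m : {unit 'F_p}) : det v w != 0 ->
    g v = scalep (val l) v -> g w = scalep (val m) w ->
  perm_conj (prod_perm (mul_perm l) (mul_perm m)) g.
Proof.
move=> dvw gv gw; apply: (coord_conj dvw) => -[x y].
rewrite additive_coord // gv gw permE /= !permE /scalep /=; congr (_, _) => /=; ring.
Qed.

Lemma jordan_conj v w (l : {unit 'F_p}) a : det v w != 0 -> a != 0 ->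
    g v = scalep (val l) v -> g w = scalep a v + scalep (val l) w ->
  perm_conj (jordan_perm l) g.
Proof.
move=> dvw a0 gv gw; have l0 : val l != 0 by rewrite -unitfE (valP l).
have dvw' : det (scalep a v) (scalep (val l) w) != 0.
  have -> : det (scalep a v) (scalep (val l) w) = a * val l * det v w.
    by rewrite /det /scalep /=; ring.
  by rewrite !mulf_neq0.
apply: (coord_conj dvw') => -[x y].
rewrite additive_coord // !(additive_scalep _ _ g_add) gv gw permE /= /scalep /=.
by congr (_, _) => /=; ring.
Qed.

Lemma additive_perm_cycle_type :
  [\/ exists d, [/\ 0 < d, d %| p ^ 2 - 1 & perm_eq (cycle_type g) (mul_type (p ^ 2 - 1) d)],
      exists d, [/\ 0 < d, d %| p - 1 & perm_eq (cycle_type g) (jordan_type p d)]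
    | exists d1 d2, [/\ 0 < d1, 0 < d2, d1 %| p - 1, d2 %| p - 1
                       & perm_eq (cycle_type g) (diag_type p d1 d2)]]%N.
Proof.
have unitP (a : 'F_p) : a != 0 -> {l : {unit 'F_p} | val l = a}.
  by rewrite -unitfE => ua; exists (FinRing.Unit ua).
have [no_eigen | ] := boolP [forall v : W, (v == 0) || [forall a, g v != scalep a v]].
  apply: Or31; apply: no_eigen_cycle_type => v a /negPf v0.
  by move/forallP/(_ v): no_eigen; rewrite v0 => /forallP.
case/forallPn => v; rewrite negb_or => /andP[v0 /forallPn[e /negPn/eqP gv]].
have [l le] := unitP e (eigenvalue_neq0 v0 gv); rewrite -le in gv.
have [/existsP[w /andP[dvw /existsP[b /eqP gw]]] | no_eigen2] :=
  boolP [exists w : W, (det v w != 0) && [exists b, g w == scalep b w]].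
  have w0 : w != 0 by apply: contraNneq dvw => ->; rewrite /det /= !mulr0 subrr.
  have [m mb] := unitP b (eigenvalue_neq0 w0 gw); rewrite -mb in gw.
  apply: Or33; exists #[l]%g, #[m]%g; rewrite !order_gt0 !order_unit_Fp //; split => //.
  have := cycle_type_diag l m; rewrite card_Fp // => /(perm_trans _); apply.
  by rewrite perm_sym; apply/perm_conj_cycle_type/(diag_conj dvw gv gw).
have no_eigen w b : det v w != 0 -> g w != scalep b w.
  move=> dvw; apply: contraNneq no_eigen2 => gw.
  by apply/existsP; exists w; rewrite dvw; apply/existsP; exists b; rewrite gw.
pose w : W := if v.1 == 0 then (1, 0) else (0, 1).
have dvw : det v w != 0.
  rewrite /w /det; have [v1 | v1] := eqVneq v.1 0; rewrite ?v1 ?eqxx ?(negPf v1) /=.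
    rewrite mul0r sub0r mulr1 oppr_eq0; apply: contraNneq v0 => v2.
    by rewrite [v]surjective_pairing v1 v2.
  by rewrite mulr1 mulr0 subr0.
(* In the basis v, w the matrix of g is [[l, a], [0, b]], and b = l since
   otherwise g would have a second eigenvector. *)
have [c _ cK] := coord_bij dvw.
have := cK (g w); set a := (c (g w)).1; set b := (c (g w)).2 => gw; symmetry in gw.
have bl : b = val l.
  apply/eqP/negPn/negP => bl; rewrite -subr_eq0 in bl.
  pose w' := scalep (a / (b - val l)) v + scalep 1 w.
  have dvw' : det v w' != 0 by rewrite (_ : det v w' = det v w) // /det /scalep /=; ring.
  apply: (negP (no_eigen _ b dvw')); apply/eqP.
  by rewrite additive_coord // gv gw /scalep /=; congr (_, _) => /=; field.
rewrite bl in gw.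
have a0 : a != 0.
  apply: contraNneq (no_eigen w (val l) dvw) => a0.
  by apply/eqP; rewrite gw a0 /scalep; congr (_, _) => /=; ring.
apply: Or32; exists #[l]%g; rewrite order_gt0 order_unit_Fp //; split => //.
apply: perm_trans (cycle_type_jordan l p_pr); rewrite perm_sym.
exact/perm_conj_cycle_type/(jordan_conj dvw a0 gv gw).
Qed.

End AdditivePlanePerm.

Lemma exists_unit_order_Fp p d : prime p -> (d %| p - 1)%N ->
  exists l : {unit 'F_p}, #[l]%g = d.
Proof. by move=> p_pr dd; apply: exists_unit_order; rewrite card_Fp // -subn1. Qed.

(* Products of finite Z-modules, such as 'F_p * 'F_p, are not canonically finZmodTypes. *)
HB.saturate prod.

Lemma Fp2_iso p : prime p ->
  exists2 E : 'Z_p * 'Z_p -> 'F_p * 'F_p, bijective E & {morph E : a b / a + b}.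
Proof.
move=> p_pr; apply: (Zp2_iso p_pr) => [|u]; first by rewrite card_prod card_Fp // mulnn.
by rewrite pairMnE !(mulrn_pchar (pchar_Fp p_pr)).
Qed.

Section Realization.
Variables (p : nat) (A : finType) (f : {perm A}).
Hypotheses (p_pr : prime p) (cardA : #|A| = (p ^ 2)%N).

Lemma card_Fp2 : #|A| = #|{: 'F_p * 'F_p}|.
Proof. by rewrite cardA card_prod card_Fp // mulnn. Qed.

Lemma auto_structure_cycle_type : auto_structure p f ->
  [\/ exists d, [/\ 0 < d, d %| p ^ 2 - 1 & perm_eq (cycle_type f) (mul_type (p ^ 2 - 1) d)],
      exists d, [/\ 0 < d, d %| p - 1 & perm_eq (cycle_type f) (jordan_type p d)]
    | exists d1 d2, [/\ 0 < d1, 0 < d2, d1 %| p - 1, d2 %| p - 1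
                       & perm_eq (cycle_type f) (diag_type p d1 d2)]]%N.
Proof.
have [E E_bij E_add] := Fp2_iso p_pr.
case/(auto_structure_additive_conj E_bij E_add) => g g_add /perm_conj_cycle_type/perm_trans ct_f.
case: (additive_perm_cycle_type p_pr g_add) => [[d [d0 dd /ct_f ct]] | [d [d0 dd /ct_f ct]] | ].
- by apply: Or31; exists d.
- by apply: Or32; exists d.
by case=> d1 [d2 [d10 d20 dd1 dd2 /ct_f ct]]; apply: Or33; exists d1, d2.
Qed.

Lemma auto_structure_id : auto_structure p (1 : {perm A}).
Proof.
have [E E_bij E_add] := Fp2_iso p_pr.
apply: (additive_conj_auto_structure E_bij E_add (g := 1)); last exact/perm_conj1/card_Fp2.
by move=> u v; rewrite !perm1.
Qed.

Lemma mul_type_auto_structure d : (d %| p ^ 2 - 1)%N ->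
  perm_eq (cycle_type f) (mul_type (p ^ 2 - 1) d) -> auto_structure p f.
Proof.
move=> dd; have [K charK cardK] := pPrimePowerField p_pr (isT : (0 < 2)%N).
have [E E_bij E_add] := Zp2_iso p_pr cardK (mulrn_pchar charK).
have [z <-] : exists z : {unit K}, #[z]%g = d by apply: exists_unit_order; rewrite cardK -subn1.
move/(cycle_type_auto_structure E_bij E_add (g := mul_perm z)); apply; rewrite ?cardK //.
  by move=> u v; rewrite !permE mulrDr.
by have := cycle_type_mul_perm z; rewrite cardK -subn1.
Qed.

Lemma jordan_type_auto_structure d : (d %| p - 1)%N ->
  perm_eq (cycle_type f) (jordan_type p d) -> auto_structure p f.
Proof.
move=> /(exists_unit_order_Fp p_pr)[l <-]; have [E E_bij E_add] := Fp2_iso p_pr.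
move/(cycle_type_auto_structure E_bij E_add (g := jordan_perm l)); apply.
- exact: card_Fp2.
- by move=> u v; rewrite !permE /= !mulrDr; congr (_, _); rewrite addrACA.
exact: cycle_type_jordan.
Qed.

Lemma diag_type_auto_structure d1 d2 : (d1 %| p - 1)%N -> (d2 %| p - 1)%N ->
  perm_eq (cycle_type f) (diag_type p d1 d2) -> auto_structure p f.
Proof.
move=> /(exists_unit_order_Fp p_pr)[l <-] /(exists_unit_order_Fp p_pr)[m <-].
have [E E_bij E_add] := Fp2_iso p_pr.
move/(cycle_type_auto_structure E_bij E_add (g := prod_perm (mul_perm l) (mul_perm m))); apply.
- exact: card_Fp2.
- by move=> u v; rewrite !permE /= !mulrDr.
by have := cycle_type_diag l m; rewrite [#|_|]card_Fp.
Qed.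

End Realization.

Local Close Scope ring_scope.

Theorem theorem2p5 (p : nat) (A : finType) (f : {perm A}) :
  prime p -> #|A| = p ^ 2 ->
  ((exists op : A -> A -> A,
      is_group_op op /\ iso_ZpxZp p op /\ is_auto op f)
   <->
   (f = 1%g \/
    (exists d, 0 < d /\ d %| p ^ 2 - 1 /\
       perm_eq (cycle_type f) (nseq ((p ^ 2 - 1) %/ d) d ++ [:: 1])) \/
    (exists d, 0 < d /\ d %| p - 1 /\
       perm_eq (cycle_type f)
         (nseq ((p - 1) %/ d) (p * d) ++ nseq ((p - 1) %/ d) d ++ [:: 1])) \/
    (exists d1 d2, 0 < d1 /\ 0 < d2 /\ d1 %| p - 1 /\ d2 %| p - 1 /\
       perm_eq (cycle_type f)
         (nseq ((p - 1) ^ 2 %/ lcmn d1 d2) (lcmn d1 d2)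
          ++ nseq ((p - 1) %/ d1) d1 ++ nseq ((p - 1) %/ d2) d2 ++ [:: 1])))).
Proof.
move=> p_pr cardA; split.
  case/(auto_structure_cycle_type p_pr) => [[d [d0 dd ct]] | [d [d0 dd ct]] | ].
  - by right; left; exists d.
  - by right; right; left; exists d.
  by case=> d1 [d2 [d10 d20 dd1 dd2 ct]]; right; right; right; exists d1, d2.
case=> [-> | [[d [_ [dd]]] | [[d [_ [dd]]] | [d1 [d2 [_ [_ [dd1 [dd2]]]]]]]]].
- exact: auto_structure_id.
- exact: mul_type_auto_structure.
- exact: jordan_type_auto_structure.
exact: diag_type_auto_structure.
Qed.
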